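(* Let $G$ be a finitely generated group and $M$ a finitely generated $G$-module, and suppose $N$ is a fixed finitely generated subsemimodule of $M$ whose membership problem is undecidable. Then the submonoid membership problem for the semidirect product $M\rtimes G$ is undecidable, namely for the fixed finitely generated submonoid $N\rtimes G=\{(n,g): n\in N, g\in G\}$.
   Context: A $G$-module is an abelian group with a left action of $G$ by automorphisms (a $\mathbb ZG$-module); a subsemimodule is a submonoid closed under the action of $G$ (a $\mathbb NG$-subsemimodule), and $\mathbb NG\cdot X$ denotes the subsemimodule generated by $X$. Fix a finite generating set $\Sigma$ of $G$, $\Sigma^{\pm}=\Sigma\cup\Sigma^{-1}$, and a finite generating set $B$ of $M$. Let $\mathbb Z\Sigma^{\pm}$ be the free ring on $\Sigma^{\pm}$ with canonical surjection $\pi:\mathbb Z\Sigma^{\pm}\to\mathbb ZG$, let $\widetilde M$ be the free $\mathbb Z\Sigma^{\pm}$-module on $B$ and $\rho:\widetilde M\to M$ the canonical projection fixing $B$. Elements of $M$ are represented by elements of $\widetilde M$. The membership problem for a subsemimodule $N$ of $M$ asks, given $x\in\widetilde M$, whether $\rho(x)\in N$. The semidirect product $M\rtimes G$ is $M\times G$ with $(m,g)(m',g')=(m+gm',gg')$. The submonoid membership problem for a fixed finitely generated submonoid $S$ of a finitely generated group $H$ with finite generating set $\Delta$ asks, given a word $w$ over $\Delta\cup\Delta^{-1}$, whether the element represented by $w$ lies in $S$. *)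

From mathcomp Require Import all_boot all_order all_algebra.
Unset Printing Implicit Defensive.
Import GRing.Theory.
Local Open Scope ring_scope.

(* Model of computation: Kleene partial recursive (mu-recursive)       *)
(* functions on nat.  Argument lists are seq nat; missing arguments    *)
(* default to 0 (this does not change the computable class).           *)
Inductive prf : Type :=
| PZero
| PSucc
| PProj of nat
| PComp of prf & seq prf
| PRec of prf & prf
| PMin of prf.

Inductive evalp : prf -> seq nat -> nat -> Prop :=
| ev_zero v : evalp PZero v 0
| ev_succ v : evalp PSucc v (nth 0%N v 0).+1
| ev_proj i v : evalp (PProj i) v (nth 0%N v i)
| ev_comp f gs v ys y :
    evalps gs v ys -> evalp f ys y -> evalp (PComp f gs) v y
| ev_rec0 f g v y : evalp f v y -> evalp (PRec f g) (0%N :: v) y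
| ev_recS f g n v r y :
    evalp (PRec f g) (n :: v) r -> evalp g [:: n, r & v] y ->
    evalp (PRec f g) (n.+1 :: v) y
| ev_min f v n :
    evalp f (n :: v) 0 ->
    (forall m, (m < n)%N -> exists k, (0 < k)%N /\ evalp f (m :: v) k) ->
    evalp (PMin f) v n
with evalps : seq prf -> seq nat -> seq nat -> Prop :=
| evs_nil v : evalps [::] v [::]
| evs_cons g gs v y ys :
    evalp g v y -> evalps gs v ys -> evalps (g :: gs) v (y :: ys).

Definition nat_decidable (P : nat -> Prop) : Prop :=
  exists p : prf, forall n, exists y, evalp p [:: n] y /\ (y = 1%N <-> P n).

Definition decidable_on {T : countType} (P : T -> Prop) : Prop :=
  nat_decidable (fun n => match @pickle_inv T n with Some x => P x | None => False end).

Record group := Group {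
  gcar :> Type;
  gmul : gcar -> gcar -> gcar;
  gone : gcar;
  ginv : gcar -> gcar;
  gmulA : forall x y z, gmul x (gmul y z) = gmul (gmul x y) z;
  gmul1 : forall x, gmul gone x = x;
  gmulV : forall x, gmul (ginv x) x = gone
}.
Arguments gmul {_} _ _.
Arguments ginv {_} _.
Arguments gone _.

Definition is_Gmodule {G : group} {M : zmodType} (act : G -> M -> M) : Prop :=
  [/\ forall g x y, act g (x + y) = act g x + act g y,
      forall x, act (gone G) x = x
    & forall g h x, act (gmul g h) x = act g (act h x)].

Definition letter {G : group} (S : seq G) (l : 'I_(size S) * bool) : G :=
  if l.2 then nth (gone G) S l.1 else ginv (nth (gone G) S l.1).

Definition gword {G : group} (S : seq G) (w : seq ('I_(size S) * bool)) : G :=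
  foldr (fun l g => gmul (letter S l) g) (gone G) w.

Definition generates {G : group} (S : seq G) : Prop :=
  forall g : G, exists w, g = gword S w.

(* Elements of the free Z<Sigma^{+-}>-module on B (tilde M): finite formal *)
(* sums of terms  z * (s_1 ... s_k) * b  with z integer, s_j in Sigma^{+-} *)
(* and b in B (index into B).                                              *)
Definition freemod (s b : nat) : Type := seq (int * seq ('I_s * bool) * 'I_b).

Definition rho {G : group} {M : zmodType} (act : G -> M -> M)
    (S : seq G) (B : seq M) (x : freemod (size S) (size B)) : M :=
  \sum_(t <- x) (act (gword S t.1.2) (nth 0 B t.2)) *~ t.1.1.

Definition module_generates {G : group} {M : zmodType} (act : G -> M -> M)
    (S : seq G) (B : seq M) : Prop :=
  forall m : M, exists x, m = rho act S B x.

Definition in_NGspan {G : group} {M : zmodType} (act : G -> M -> M)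
    (X : seq M) (m : M) : Prop :=
  exists l : seq (G * 'I_(size X)), m = \sum_(t <- l) act t.1 (nth 0 X t.2).

Definition sdmul {G : group} {M : zmodType} (act : G -> M -> M)
    (p q : M * G) : M * G := (p.1 + act p.2 q.1, gmul p.2 q.2).
Definition sdone (G : group) (M : zmodType) : M * G := (0, gone G).
Definition sdinv {G : group} {M : zmodType} (act : G -> M -> M)
    (p : M * G) : M * G := (- act (ginv p.2) p.1, ginv p.2).

Definition sdletter {G : group} {M : zmodType} (act : G -> M -> M)
    (D : seq (M * G)) (l : 'I_(size D) * bool) : M * G :=
  if l.2 then nth (sdone G M) D l.1 else sdinv act (nth (sdone G M) D l.1).

Definition sdword {G : group} {M : zmodType} (act : G -> M -> M)
    (D : seq (M * G)) (w : seq ('I_(size D) * bool)) : M * G :=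
  foldr (fun l p => sdmul act (sdletter act D l) p) (sdone G M) w.

Definition sd_generates {G : group} {M : zmodType} (act : G -> M -> M)
    (D : seq (M * G)) : Prop :=
  forall p : M * G, exists w, p = sdword act D w.

(* Membership in N x| G = {(n,g) : n in N, g in G}, N = NG.X. *)
Definition in_NsdG {G : group} {M : zmodType} (act : G -> M -> M)
    (X : seq M) (p : M * G) : Prop := in_NGspan act X p.1.

From mathcomp Require Import all_boot all_order all_algebra.
From mathcomp Require Import zify.
Import GRing.Theory.

(* Pick words over [D] representing [(0, s)] for every letter [s] of [Sigma^{+-}]
   and [(+-b, 1)] for every [b] in [B].  Sending a term [z * (s_1 ... s_k) * b]
   of the free module to [u_(s_1) ... u_(s_k) (v_(+-b))^|z| (u_(s_1) ... u_(s_k))^-1]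
   and concatenating gives a word whose value in [M x| G] is [(rho x, 1)], and
   [(rho x, 1)] lies in [N x| G] iff [rho x] lies in [N].  The translation is a
   computable map on Goedel codes and valid codes of the free module are
   recognisable, so a decision procedure for [N x| G] would decide [N]. *)

(** * Partial recursive functions *)

Definition args k (v : seq nat) := mkseq (fun i => nth 0 v i) k.

Definition computable k (F : seq nat -> nat) :=
  exists p, forall v, evalp p v (F (args k v)).

Lemma size_args k v : size (args k v) = k.
Proof. by rewrite size_mkseq. Qed.

Lemma args_id k v : size v = k -> args k v = v.
Proof.
move=> Hs; apply: (@eq_from_nth _ 0); rewrite size_args ?Hs // => i Hi.
by rewrite nth_mkseq.
Qed.

Lemma args_cons k v : args k.+1 v = nth 0 v 0 :: args k (behead v).
Proof.
apply: (@eq_from_nth _ 0); first by rewrite size_args /= size_args.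
rewrite size_args => -[|i] Hi; first by rewrite nth_mkseq.
rewrite nth_mkseq //= nth_mkseq //.
by case: v => // *; rewrite !nth_nil.
Qed.

Lemma evalps_proj k v : evalps (mkseq PProj k) v (args k v).
Proof.
rewrite /args /mkseq; elim: (iota 0 k) => [|i s IH] /=; first exact: evs_nil.
by apply: evs_cons => //; apply: ev_proj.
Qed.

Lemma computable_ext {k F G} :
  computable k F -> (forall v, size v = k -> F v = G v) -> computable k G.
Proof. by move=> [p Hp] FG; exists p => v; rewrite -FG ?size_args. Qed.

Lemma computable_proj {k i} : i < k -> computable k (fun v => nth 0 v i).
Proof. by move=> Hi; exists (PProj i) => v; rewrite nth_mkseq //; apply: ev_proj. Qed.

Lemma computable_succ : computable 1 (fun v => (nth 0 v 0).+1).
Proof. by exists PSucc => v; rewrite nth_mkseq //; apply: ev_succ. Qed.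

Lemma computable_zero k : computable k (fun _ => 0).
Proof. by exists PZero => v; apply: ev_zero. Qed.

Lemma computable_comp {k k' F} {gs : seq (seq nat -> nat)} :
  computable k' F -> size gs = k' -> (forall g, List.In g gs -> computable k g) ->
  computable k (fun v => F (map (fun g => g v) gs)).
Proof.
move=> [pF HF] Hs Hg.
have [ps Hps] : exists ps, forall v, evalps ps v [seq g (args k v) | g <- gs].
  elim: gs Hg {Hs} => [|g gs IH] Hg; first by exists [::] => v; apply: evs_nil.
  have [pg Hpg] := Hg g (or_introl erefl).
  have [ps Hps] := IH (fun g' H => Hg g' (or_intror H)).
  by exists (pg :: ps) => v; apply: evs_cons.
exists (PComp pF ps) => v; apply: ev_comp (Hps v) _.
by have := HF [seq g (args k v) | g <- gs]; rewrite [args k' _]args_id // size_map.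
Qed.

Lemma computable_comp1 {k F g} :
  computable 1 F -> computable k g -> computable k (fun v => F [:: g v]).
Proof. by move=> HF Hg; apply: (@computable_comp k 1 F [:: g]) => // g' [<-|[]]. Qed.

Lemma computable_comp2 {k F g1 g2} : computable 2 F ->
  computable k g1 -> computable k g2 -> computable k (fun v => F [:: g1 v; g2 v]).
Proof.
by move=> HF H1 H2; apply: (@computable_comp k 2 F [:: g1; g2]) => // g' [<-|[<-|[]]].
Qed.

Lemma computable_cons {k F g} :
  computable k.+1 F -> computable k g -> computable k (fun v => F (g v :: v)).
Proof.
move=> [pF HF] [pg Hg]; exists (PComp pF (pg :: mkseq PProj k)) => v.
apply: ev_comp; first by apply: evs_cons; [apply: Hg | apply: evalps_proj].
by have := HF (g (args k v) :: args k v); rewrite [args k.+1 _]args_id //= size_args.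
Qed.

Fixpoint primrec (F G : seq nat -> nat) n w :=
  if n is n'.+1 then G [:: n', primrec F G n' w & w] else F w.

Lemma computable_primrec {k F G} : computable k F -> computable k.+2 G ->
  computable k.+1 (fun v => primrec F G (nth 0 v 0) (behead v)).
Proof.
move=> [pF HF] [pG HG].
have Hrec n w : size w = k -> evalp (PRec pF pG) (n :: w) (primrec F G n w).
  move=> Hw; elim: n => [|n IH] /=.
    by apply: ev_rec0; have := HF w; rewrite args_id.
  by apply: ev_recS IH _; have := HG [:: n, primrec F G n w & w]; rewrite args_id //= Hw.
exists (PComp (PRec pF pG) (mkseq PProj k.+1)) => v.
by apply: ev_comp; [apply: evalps_proj | rewrite args_cons; apply/Hrec/size_args].
Qed.

Lemma computable_mu {k f} g : computable k.+1 f ->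
  (forall w, size w = k ->
     f (g w :: w) = 0 /\ forall m, m < g w -> 0 < f (m :: w)) ->
  computable k g.
Proof.
move=> [pf Hf] Hg; exists (PMin pf) => v.
have [H1 H2] := Hg (args k v) (size_args _ _).
apply: ev_min; first by have := Hf (g (args k v) :: v); rewrite args_cons /= H1.
move=> m Hm; exists (f (m :: args k v)); split; first exact: H2.
by have := Hf (m :: v); rewrite args_cons.
Qed.

Lemma computable_const k c : computable k (fun _ => c).
Proof.
elim: c => [|c IH]; first exact: computable_zero.
exact: computable_comp1 computable_succ IH.
Qed.

Lemma computable_drop d {k F} : computable k F -> computable (d + k) (fun v => F (drop d v)).
Proof.
move=> [pF HF]; exists (PComp pF (mkseq (fun i => PProj (d + i)) k)) => v.
set u := mkseq (fun i => nth 0 v (d + i)) k.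
have -> : drop d (args (d + k) v) = u.
  apply: (@eq_from_nth _ 0); first by rewrite size_drop size_args size_mkseq addKn.
  rewrite size_drop size_args addKn => i Hi.
  by rewrite nth_drop nth_mkseq ?nth_mkseq // ltn_add2l.
apply: (@ev_comp pF _ v u); last by have := HF u; rewrite args_id // size_mkseq.
rewrite /u /mkseq; elim: (iota 0 k) => [|i s IH] /=; first exact: evs_nil.
by apply: evs_cons => //; apply: ev_proj.
Qed.

Lemma computable_mkseq {k k' F} (gs : nat -> seq nat -> nat) :
  computable k' F -> (forall i, i < k' -> computable k (gs i)) ->
  computable k (fun v => F (mkseq (fun i => gs i v) k')).
Proof.
move=> HF Hg.
have := @computable_comp k k' F (mkseq gs k') HF; rewrite size_mkseq => /(_ erefl) H.
apply: (computable_ext (H _)) => [g|v _]; last by rewrite /mkseq -map_comp.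
rewrite /mkseq => /List.in_map_iff [i [<- Hi]]; apply: Hg.
suff : i \in iota 0 k' by rewrite mem_iota.
by elim: (iota 0 k') Hi => //= a s IH [->|/IH]; rewrite inE ?eqxx // => ->; rewrite orbT.
Qed.

Definition computable_bool k (b : seq nat -> bool) :=
  computable k (fun v => nat_of_bool (b v)).

Lemma size2_nth (v : seq nat) : size v = 2 -> v = [:: nth 0 v 0; nth 0 v 1].
Proof. by case: v => [|a [|b [|]]]. Qed.

Lemma size1_nth (v : seq nat) : size v = 1 -> v = [:: nth 0 v 0].
Proof. by case: v => [|a [|]]. Qed.

Lemma computable_add {k g1 g2} :
  computable k g1 -> computable k g2 -> computable k (fun v => g1 v + g2 v).
Proof.
have Hadd : computable 2 (fun v => nth 0 v 0 + nth 0 v 1).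
  have H := computable_primrec (computable_proj (isT : 0 < 1))
    (computable_comp1 computable_succ (computable_proj (isT : 1 < 3))).
  apply: (computable_ext H) => v /size2_nth -> /=.
  by elim: (nth 0 v 0) => //= n ->.
exact: computable_comp2 Hadd.
Qed.

Lemma computable_mul {k g1 g2} :
  computable k g1 -> computable k g2 -> computable k (fun v => g1 v * g2 v).
Proof.
have Hmul : computable 2 (fun v => nth 0 v 0 * nth 0 v 1).
  have H := computable_primrec (computable_zero 1)
    (computable_add (computable_proj (isT : 1 < 3)) (computable_proj (isT : 2 < 3))).
  apply: (computable_ext H) => v /size2_nth -> /=.
  by elim: (nth 0 v 0) => //= n ->; rewrite mulSn addnC.
exact: computable_comp2 Hmul.
Qed.

Lemma computable_pred {k g} : computable k g -> computable k (fun v => (g v).-1).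
Proof.
have Hpred : computable 1 (fun v => (nth 0 v 0).-1).
  have H := computable_primrec (computable_zero 0) (computable_proj (isT : 0 < 2)).
  by apply: (computable_ext H) => v /size1_nth -> /=; case: (nth 0 v 0).
exact: computable_comp1 Hpred.
Qed.

Lemma computable_sub {k g1 g2} :
  computable k g1 -> computable k g2 -> computable k (fun v => g1 v - g2 v).
Proof.
have Hsub : computable 2 (fun v => nth 0 v 1 - nth 0 v 0).
  have H := computable_primrec (computable_proj (isT : 0 < 1))
    (computable_pred (computable_proj (isT : 1 < 3))).
  apply: (computable_ext H) => v /size2_nth -> /=.
  by elim: (nth 0 v 0) => [|n /= ->]; rewrite ?subn0 ?subnS.
by move=> H1 H2; apply: computable_comp2 Hsub H2 H1.
Qed.

Lemma computable_eq0 {k g} : computable k g -> computable_bool k (fun v => g v == 0).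
Proof.
have Heq0 : computable 1 (fun v => nat_of_bool (nth 0 v 0 == 0)).
  have H := computable_primrec (computable_const 0 1) (computable_zero 2).
  by apply: (computable_ext H) => v /size1_nth -> /=; case: (nth 0 v 0).
exact: computable_comp1 Heq0.
Qed.

Lemma computable_eqn {k g1 g2} :
  computable k g1 -> computable k g2 -> computable_bool k (fun v => g1 v == g2 v).
Proof.
move=> H1 H2.
apply: (computable_ext (computable_eq0 (computable_add (computable_sub H1 H2)
                                                     (computable_sub H2 H1)))).
by move=> v _; congr nat_of_bool; apply/eqP/eqP; lia.
Qed.

Lemma computable_negb {k b} : computable_bool k b -> computable_bool k (fun v => ~~ b v).
Proof.
move=> H; apply: (computable_ext (computable_sub (computable_const k 1) H)).
by move=> v _; case: (b v).
Qed.

Lemma computable_andb {k b1 b2} :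
  computable_bool k b1 -> computable_bool k b2 -> computable_bool k (fun v => b1 v && b2 v).
Proof.
move=> H1 H2; apply: (computable_ext (computable_mul H1 H2)).
by move=> v _; case: (b1 v); case: (b2 v).
Qed.

Lemma computable_ltn {k g1 g2} :
  computable k g1 -> computable k g2 -> computable_bool k (fun v => g1 v < g2 v).
Proof.
move=> H1 H2; apply: (computable_ext (computable_negb (computable_eq0 (computable_sub H2 H1)))).
by move=> v _; rewrite subn_eq0 ltnNge.
Qed.

Lemma computable_ifn {k b g1 g2} : computable_bool k b ->
  computable k g1 -> computable k g2 -> computable k (fun v => if b v then g1 v else g2 v).
Proof.
move=> Hb H1 H2.
apply: (computable_ext (computable_add (computable_mul Hb H1)
                                      (computable_mul (computable_negb Hb) H2))).
by move=> v _; case: (b v); rewrite /= ?mul1n ?mul0n ?addn0.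
Qed.

Lemma computable_exp2 {k g} : computable k g -> computable k (fun v => 2 ^ g v).
Proof.
have Hexp : computable 1 (fun v => 2 ^ nth 0 v 0).
  have H := computable_primrec (computable_const 0 1)
    (computable_add (computable_proj (isT : 1 < 2)) (computable_proj (isT : 1 < 2))).
  apply: (computable_ext H) => v /size1_nth -> /=.
  by elim: (nth 0 v 0) => //= n ->; rewrite expnS mul2n addnn.
exact: computable_comp1 Hexp.
Qed.

Lemma computable_odd {k g} : computable k g -> computable_bool k (fun v => odd (g v)).
Proof.
have Hodd : computable 1 (fun v => nat_of_bool (odd (nth 0 v 0))).
  have H := computable_primrec (computable_zero 0)
    (computable_sub (computable_const 2 1) (computable_proj (isT : 1 < 2))).
  apply: (computable_ext H) => v /size1_nth -> /=.
  by elim: (nth 0 v 0) => //= n ->; case: (odd n).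
exact: computable_comp1 Hodd.
Qed.

(* [a %/ d] is the least [q] with [a < d * q + d], and [0] when [d = 0]. *)
Lemma computable_div {k g1 g2} :
  computable k g1 -> computable k g2 -> computable k (fun v => g1 v %/ g2 v).
Proof.
pose b w := (0 < nth 0 w 2) && ~~ (nth 0 w 1 < nth 0 w 2 * nth 0 w 0 + nth 0 w 2).
have Hb : computable_bool 3 b.
  apply: computable_andb.
    exact: computable_ltn (computable_const _ 0) (computable_proj (isT : 2 < 3)).
  apply/computable_negb/computable_ltn; first exact: (computable_proj (isT : 1 < 3)).
  apply: computable_add (computable_proj (isT : 2 < 3)).
  exact: computable_mul (computable_proj (isT : 2 < 3)) (computable_proj (isT : 0 < 3)).
have Hdiv : computable 2 (fun v => nth 0 v 0 %/ nth 0 v 1).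
  apply: (computable_mu _ Hb) => w /size2_nth ->; rewrite /b /=.
  set a := nth 0 w 0; set d := nth 0 w 1.
  case: (posnP d) => [->|Hd] /=; first by rewrite divn0.
  have Hq q : (a < d * q + d) = (a %/ d < q.+1).
    by rewrite ltn_divLR // mulSn addnC mulnC.
  split=> [|m Hm]; first by rewrite Hq ltnSn.
  by rewrite Hq ltnS -ltnNge Hm.

exact: computable_comp2 Hdiv.
Qed.

(** * Goedel codes of sequences *)

Notation code := CodeSeq.code.
Notation decode := CodeSeq.decode.

Lemma code_consE x s : code (x :: s) = 2 ^ x * (code s).*2.+1.
Proof. by []. Qed.

Lemma code_eq0 s : (code s == 0) = (s == [::]).
Proof. by case: s => //= x s; rewrite muln_eq0 expn_eq0. Qed.

Definition code_head n := head 0 (decode n).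
Definition code_behead n := code (behead (decode n)).
Definition code_drop j n := code (drop j (decode n)).

Lemma divn_exp2 x m c : m <= x -> (2 ^ x * c) %/ 2 ^ m = 2 ^ (x - m) * c.
Proof. by move=> Hm; rewrite -{1}(subnKC Hm) expnD -mulnA mulKn // expn_gt0. Qed.

(* The head of [code (x :: s)] is the exponent of 2 in it, i.e. the least [m]
   such that [n %/ 2 ^ m] is odd. *)
Lemma computable_code_head {k g} : computable k g -> computable k (fun v => code_head (g v)).
Proof.
pose b w := (0 < nth 0 w 1) && ~~ odd (nth 0 w 1 %/ 2 ^ nth 0 w 0).
have Hb : computable_bool 2 b.
  apply: computable_andb.
    exact: computable_ltn (computable_const _ 0) (computable_proj (isT : 1 < 2)).
  apply/computable_negb/computable_odd/computable_div.
    exact: (computable_proj (isT : 1 < 2)).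
  exact: computable_exp2 (computable_proj (isT : 0 < 2)).
have Hhead : computable 1 (fun v => code_head (nth 0 v 0)).
  apply: (computable_mu _ Hb) => w /size1_nth ->; rewrite /b /=.
  set n := nth 0 w 0; rewrite /code_head.
  case: (posnP n) => [->|Hn] //=.
  rewrite -(CodeSeq.decodeK n) in Hn *.
  case: (decode n) Hn => [|x s] //= Hn; rewrite -code_consE CodeSeq.codeK /=.
  split; first by rewrite divn_exp2 // subnn mul1n oddS odd_double.
  move=> m Hm; rewrite divn_exp2 ?(ltnW Hm) // oddM.
  by case E: (x - m) => [|y]; [lia | rewrite expnS oddM].
exact: computable_comp1 Hhead.
Qed.

Lemma code_beheadE n : code_behead n = n %/ 2 ^ (code_head n).+1.
Proof.
rewrite /code_behead /code_head; move: (CodeSeq.decodeK n).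
case: (decode n) => [|x s] /= <-; first by rewrite div0n.
rewrite expnS [2 * _]mulnC divnMA mulKn ?expn_gt0 //; lia.
Qed.

Lemma computable_code_behead {k g} :
  computable k g -> computable k (fun v => code_behead (g v)).
Proof.
move=> H; apply: (computable_ext (computable_div H (computable_exp2
  (computable_add (computable_code_head H) (computable_const _ 1))))).
by move=> v _; rewrite code_beheadE addn1.
Qed.

Lemma computable_code_drop {k g1 g2} : computable k g1 -> computable k g2 ->
  computable k (fun v => code_drop (g1 v) (g2 v)).
Proof.
have Hdrop : computable 2 (fun v => code_drop (nth 0 v 0) (nth 0 v 1)).
  have H := computable_primrec (computable_proj (isT : 0 < 1))
    (computable_code_behead (computable_proj (isT : 1 < 3))).
  apply: (computable_ext H) => v /size2_nth -> /=.
  elim: (nth 0 v 0) => /= [|j ->]; first by rewrite /code_drop drop0 CodeSeq.decodeK.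
  by rewrite /code_behead /code_drop CodeSeq.codeK -drop1 drop_drop add1n.
exact: computable_comp2 Hdrop.
Qed.

(* The length of [decode n] is the least [j] with [code_drop j n = 0]. *)
Lemma computable_size_decode {k g} :
  computable k g -> computable k (fun v => size (decode (g v))).
Proof.
have Hb : computable_bool 2 (fun w => code_drop (nth 0 w 0) (nth 0 w 1) != 0).
  apply/computable_negb/computable_eq0.
  exact: computable_code_drop (computable_proj (isT : 0 < 2)) (computable_proj (isT : 1 < 2)).
have Hsize : computable 1 (fun v => size (decode (nth 0 v 0))).
  apply: (computable_mu _ Hb) => w /size1_nth ->.
  have Hdrop0 j n : (code_drop j n == 0) = (size (decode n) <= j).
    by rewrite /code_drop code_eq0 -size_eq0 size_drop subn_eq0.
  split=> [|m Hm] /=; first by rewrite Hdrop0 leqnn.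
  by rewrite Hdrop0 -ltnNge Hm.
exact: computable_comp1 Hsize.
Qed.

Lemma computable_nth_decode {k g1 g2} : computable k g1 -> computable k g2 ->
  computable k (fun v => nth 0 (decode (g2 v)) (g1 v)).
Proof.
move=> H1 H2; apply: (computable_ext (computable_code_head (computable_code_drop H1 H2))).
by move=> v _; rewrite /code_head /code_drop CodeSeq.codeK -nth0 nth_drop addn0.
Qed.

Lemma computable_code_cons {k g1 g2} : computable k g1 -> computable k g2 ->
  computable k (fun v => code (g1 v :: decode (g2 v))).
Proof.
move=> H1 H2; apply: (computable_ext (computable_mul (computable_exp2 H1)
  (computable_add (computable_add H2 H2) (computable_const _ 1)))).
by move=> v _; rewrite code_consE CodeSeq.decodeK addn1 addnn.
Qed.

Lemma computable_set_head {k g F} : computable k.+1 F -> computable k.+1 g ->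
  computable k.+1 (fun u => F (g u :: behead u)).
Proof.
move=> HF Hg.
pose gs i u := if i is 0 then g u else nth 0 u i.
have H : computable k.+1 (fun u => F (mkseq (fun i => gs i u) k.+1)).
  by apply: (computable_mkseq gs HF) => -[|i] Hi //; apply: computable_proj.
apply: (computable_ext H) => u Hu; congr F.
apply: (@eq_from_nth _ 0); first by rewrite size_mkseq /= size_behead Hu.
by rewrite size_mkseq => -[|i] Hi; rewrite nth_mkseq //= nth_behead.
Qed.

(* The fold is computed by primitive recursion on the number of remaining
   items, looking up the current item with [nth]. *)
Lemma computable_foldr {k h a c} : computable k.+2 h -> computable k a -> computable k c ->
  computable k (fun v => foldr (fun x acc => h [:: x, acc & v]) (a v) (decode (c v))).
Proof.
move=> Hh Ha Hc.
pose L v := size (decode (c v)).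
pose item u := nth 0 (decode (c (drop 2 u))) (L (drop 2 u) - (nth 0 u 0).+1).
have Hc2 : computable k.+2 (fun u => c (drop 2 u)) by apply: (computable_drop 2 Hc).
have Hitem : computable k.+2 item.
  apply: (computable_nth_decode _ Hc2); apply: (computable_sub (computable_size_decode Hc2)).
  apply: (computable_ext (computable_add (computable_proj (isT : 0 < k.+2))
                                           (computable_const _ 1))).
  by move=> u _; rewrite addn1.
pose step u := h (item u :: behead u).
have H := computable_cons (computable_primrec Ha (computable_set_head Hh Hitem))
                          (computable_size_decode Hc).
apply: (computable_ext H) => v Hv /=.
suff E j : j <= L v -> primrec a step j v =
   foldr (fun x acc => h [:: x, acc & v]) (a v) (drop (L v - j) (decode (c v))).
  by rewrite E // subnn drop0.
elim: j => [|j IH] Hj /=; first by rewrite subn0 drop_oversize.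
rewrite IH ?(ltnW Hj) // /step /item /= drop0.
rewrite (drop_nth 0 (n := L v - j.+1)); last by move: Hj; rewrite /L; lia.
by have -> : (L v - j.+1).+1 = L v - j by lia.
Qed.

Lemma computable_lookup (t : seq nat) {k g} :
  computable k g -> computable k (fun v => nth 0 t (g v)).
Proof.
elim: t g => [|a t IH] g Hg /=.
  by apply: (computable_ext (computable_const k 0)) => v _; rewrite nth_nil.
have H := computable_ifn (computable_eq0 Hg) (computable_const k a) (IH _ (computable_pred Hg)).
by apply: (computable_ext H) => v _; case: (g v).
Qed.

Definition code_cat a b := code (decode a ++ decode b).

Lemma computable_code_cat {k g1 g2} : computable k g1 -> computable k g2 ->
  computable k (fun v => code_cat (g1 v) (g2 v)).
Proof.
move=> H1 H2.
have Hcons : computable k.+2 (fun u => code (nth 0 u 0 :: decode (nth 0 u 1))).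
  exact: computable_code_cons (computable_proj (isT : 0 < k.+2)) (computable_proj (isT : 1 < k.+2)).
apply: (computable_ext (computable_foldr Hcons H2 H1)) => v _ /=.
rewrite /code_cat; elim: (decode (g1 v)) => [|x s /= ->] /=; first by rewrite CodeSeq.decodeK.
by rewrite CodeSeq.codeK.
Qed.

Definition code_rep j c := code (flatten (nseq j (decode c))).

Lemma computable_code_rep {k g1 g2} : computable k g1 -> computable k g2 ->
  computable k (fun v => code_rep (g1 v) (g2 v)).
Proof.
have Hrep : computable 2 (fun v => code_rep (nth 0 v 0) (nth 0 v 1)).
  have H := computable_primrec (computable_zero 1)
    (computable_code_cat (computable_proj (isT : 2 < 3)) (computable_proj (isT : 1 < 3))).
  apply: (computable_ext H) => v /size2_nth -> /=.
  by rewrite /code_rep; elim: (nth 0 v 0) => //= j ->; rewrite /code_cat CodeSeq.codeK.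
exact: computable_comp2 Hrep.
Qed.

(** * Computable maps between countable types *)

Definition computable1 (F : nat -> nat) := computable 1 (fun v => F (nth 0 v 0)).

Lemma computable1_comp {k F g} :
  computable1 F -> computable k g -> computable k (fun v => F (g v)).
Proof. exact: computable_comp1. Qed.

Definition pickled (T : countType) n := isSome (@pickle_inv T n).

Lemma pickledP (T : countType) n : reflect (exists x : T, pickle x = n) (pickled T n).
Proof.
rewrite /pickled; case E: pickle_inv => [x|] /=; constructor.
  by exists x; have := @pickle_invK T n; rewrite E.
by case=> x Hx; move: E; rewrite -Hx pickleK_inv.
Qed.

Definition decidable_pickled (T : countType) := computable1 (fun n => pickled T n).

Lemma computable_pickled {T : countType} {k g} : decidable_pickled T ->
  computable k g -> computable_bool k (fun v => pickled T (g v)).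
Proof. exact: computable_comp1. Qed.

Definition computable_map {T U : countType} (f : T -> U) :=
  exists2 F : nat -> nat, computable1 F & forall x, F (pickle x) = pickle (f x).

Lemma pickle_pairE (T1 T2 : countType) (x : T1) (y : T2) :
  pickle (x, y) = code [:: pickle x; pickle y].
Proof. by []. Qed.

Lemma pickle_seqE (T : countType) (s : seq T) : pickle s = code (map pickle s).
Proof. by []. Qed.

Lemma decode_pickle_seq (T : countType) (s : seq T) : decode (pickle s) = map pickle s.
Proof. by rewrite pickle_seqE CodeSeq.codeK. Qed.

(* Pickles of a finite type are bounded, so a function of them is a finite
   table lookup. *)
Lemma computable_fin_pickle {T : finType} (f : T -> nat) :
  computable1 (fun n => oapp f 0 (@pickle_inv T n)).
Proof.
pose N := \max_(x : T) (pickle x).+1.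
pose F n := oapp f 0 (@pickle_inv T n).
apply: (computable_ext (computable_lookup (mkseq F N) (computable_proj (isT : 0 < 1)))).
move=> v _; case: (ltnP (nth 0 v 0) N) => [|HN]; first exact: nth_mkseq.
rewrite nth_default ?size_mkseq // /F.
case E: pickle_inv => [x|] //=; have := @pickle_invK T (nth 0 v 0); rewrite E /= => Hx.
by move: HN; rewrite -Hx leqNgt (leq_bigmax_cond x).
Qed.

Lemma computable_map_fin {T : finType} {U : countType} (f : T -> U) : computable_map f.
Proof.
exists (fun n => oapp (fun x => pickle (f x)) 0 (@pickle_inv T n)).
  exact: computable_fin_pickle.
by move=> x; rewrite pickleK_inv.
Qed.

Lemma decidable_pickled_fin (T : finType) : decidable_pickled T.
Proof.
have := computable_fin_pickle (fun _ : T => 1); rewrite /decidable_pickled /computable1.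
move=> H; apply: (computable_ext H) => v _ /=.
by rewrite /pickled; case: pickle_inv.
Qed.

Lemma computable_map_comp {T U V : countType} {f : T -> U} {g : U -> V} :
  computable_map f -> computable_map g -> computable_map (g \o f).
Proof.
move=> [F HF Ff] [G HG Gg]; exists (fun n => G (F n)) => [|x].
  exact: computable1_comp HG HF.
by rewrite /= Ff Gg.
Qed.

Lemma computable_map_fst (T1 T2 : countType) : computable_map (@fst T1 T2).
Proof.
exists (fun n => nth 0 (decode n) 0) => [|[x y]]; last by rewrite pickle_pairE CodeSeq.codeK.
exact: computable_nth_decode (computable_const 1 0) (computable_proj (isT : 0 < 1)).
Qed.

Lemma computable_map_snd (T1 T2 : countType) : computable_map (@snd T1 T2).
Proof.
exists (fun n => nth 0 (decode n) 1) => [|[x y]]; last by rewrite pickle_pairE CodeSeq.codeK.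
exact: computable_nth_decode (computable_const 1 1) (computable_proj (isT : 0 < 1)).
Qed.

Lemma computable_map_pair {T U1 U2 : countType} {f1 : T -> U1} {f2 : T -> U2} :
  computable_map f1 -> computable_map f2 -> computable_map (fun x => (f1 x, f2 x)).
Proof.
move=> [F1 HF1 Ff1] [F2 HF2 Ff2].
exists (fun n => code (F1 n :: decode (code (F2 n :: decode 0)))) => [|x].
  apply: computable_code_cons; first exact: HF1.
  exact: computable_code_cons HF2 (computable_const 1 0).
by rewrite CodeSeq.codeK Ff1 Ff2.
Qed.

Lemma computable_map_map {T U : countType} {f : T -> U} :
  computable_map f -> computable_map (map f).
Proof.
move=> [F HF Ff].
exists (fun n => foldr (fun x acc => code (F x :: decode acc)) 0 (decode n)) => [|s].
  have Hcons : computable 3 (fun u => code (F (nth 0 u 0) :: decode (nth 0 u 1))).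
    exact: computable_code_cons (computable1_comp HF (computable_proj (isT : 0 < 3)))
                                (computable_proj (isT : 1 < 3)).
  exact: computable_foldr Hcons (computable_const 1 0) (computable_proj (isT : 0 < 1)).
rewrite decode_pickle_seq pickle_seqE; elim: s => //= x s ->.
by rewrite CodeSeq.codeK Ff.
Qed.

Lemma computable_map_flatten (T : countType) : computable_map (@flatten T).
Proof.
exists (fun n => foldr code_cat 0 (decode n)) => [|ss].
  have Hcat : computable 3 (fun u => code_cat (nth 0 u 0) (nth 0 u 1)).
    exact: computable_code_cat (computable_proj (isT : 0 < 3)) (computable_proj (isT : 1 < 3)).
  exact: computable_foldr Hcat (computable_const 1 0) (computable_proj (isT : 0 < 1)).
rewrite decode_pickle_seq; elim: ss => //= s ss ->.
by rewrite /code_cat !decode_pickle_seq -map_cat.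
Qed.

Lemma computable_map_cat {T U : countType} {f g : T -> seq U} :
  computable_map f -> computable_map g -> computable_map (fun x => f x ++ g x).
Proof.
move=> [F HF Ff] [G HG Gg]; exists (fun n => code_cat (F n) (G n)) => [|x].
  exact: computable_code_cat HF HG.
by rewrite Ff Gg /code_cat !decode_pickle_seq -map_cat.
Qed.

Lemma computable_map_rev (T : countType) : computable_map (@rev T).
Proof.
exists (fun n => foldr (fun x acc => code_cat acc (code (x :: decode 0))) 0 (decode n)).
  have Hsnoc : computable 3 (fun u => code_cat (nth 0 u 1) (code (nth 0 u 0 :: decode 0))).
    apply: computable_code_cat (computable_proj (isT : 1 < 3)) _.
    exact: computable_code_cons (computable_proj (isT : 0 < 3)) (computable_const 3 0).
  exact: computable_foldr Hsnoc (computable_const 1 0) (computable_proj (isT : 0 < 1)).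
move=> s; rewrite decode_pickle_seq; elim: s => //= x s ->.
rewrite rev_cons -cats1 /code_cat decode_pickle_seq.
by rewrite -[2 ^ _ * _]/(code [:: pickle x]) CodeSeq.codeK pickle_seqE map_cat.
Qed.

Lemma computable_map_nseq {T U : countType} {n : T -> nat} {f : T -> seq U} :
  computable_map n -> computable_map f ->
  computable_map (fun x => flatten (nseq (n x) (f x))).
Proof.
move=> [N HN Nn] [F HF Ff]; exists (fun m => code_rep (N m) (F m)) => [|x].
  exact: computable_code_rep HN HF.
by rewrite Nn Ff /code_rep decode_pickle_seq pickle_seqE map_flatten map_nseq.
Qed.

Lemma pickled_pair (T1 T2 : countType) n :
  pickled (T1 * T2)%type n = [&& size (decode n) == 2, pickled T1 (nth 0 (decode n) 0)
                                                & pickled T2 (nth 0 (decode n) 1)].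
Proof.
apply/pickledP/and3P => [[[x y] <-]|[/eqP/size2_nth Hn /pickledP[x Hx] /pickledP[y Hy]]].
  by rewrite pickle_pairE CodeSeq.codeK; split=> //; apply/pickledP; [exists x|exists y].
by exists (x, y); rewrite pickle_pairE Hx Hy -Hn CodeSeq.decodeK.
Qed.

Lemma pickled_seq (T : countType) n : pickled (seq T) n = all (pickled T) (decode n).
Proof.
apply/pickledP/allP => [[s <-] m|Hall].
  by rewrite decode_pickle_seq => /mapP[x _ ->]; apply/pickledP; exists x.
suff [s Hs] : exists s : seq T, map pickle s = decode n.
  by exists s; rewrite pickle_seqE Hs CodeSeq.decodeK.
elim: (decode n) Hall => [|m l IH] Hall; first by exists [::].
have /pickledP[x Hx] := Hall m (mem_head _ _).
have [s Hs] := IH (fun y Hy => Hall y (mem_behead (s := m :: l) Hy)).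
by exists (x :: s); rewrite /= Hx Hs.
Qed.

Lemma pickled_decoder {T : countType} {dec : nat -> T} :
  cancel pickle dec -> forall n, pickled T n = (pickle (dec n) == n).
Proof.
move=> decK n; apply/pickledP/eqP => [[x <-]|<-]; last by exists (dec n).
by rewrite decK.
Qed.

Lemma decidable_pickled_pair (T1 T2 : countType) :
  decidable_pickled T1 -> decidable_pickled T2 -> decidable_pickled (T1 * T2)%type.
Proof.
move=> H1 H2; have Hn : computable 1 (fun v => nth 0 v 0) by apply: computable_proj.
have Hsize := computable_eqn (computable_size_decode Hn) (computable_const 1 2).
have Hfst := computable_pickled H1 (computable_nth_decode (computable_const 1 0) Hn).
have Hsnd := computable_pickled H2 (computable_nth_decode (computable_const 1 1) Hn).
apply: (computable_ext (computable_andb Hsize (computable_andb Hfst Hsnd))) => v _.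
by rewrite pickled_pair.
Qed.

Lemma decidable_pickled_seq (T : countType) :
  decidable_pickled T -> decidable_pickled (seq T).
Proof.
move=> HT; rewrite /decidable_pickled /computable1.
have Hstep : computable 3 (fun u => pickled T (nth 0 u 0) * nth 0 u 1).
  exact: computable_mul (computable_pickled HT (computable_proj (isT : 0 < 3)))
                        (computable_proj (isT : 1 < 3)).
apply: (computable_ext (computable_foldr Hstep (computable_const 1 1)
                                         (computable_proj (isT : 0 < 1)))) => v _ /=.
rewrite pickled_seq; elim: (decode _) => //= m l ->.
by case: (pickled T m); rewrite ?mul1n.
Qed.

Lemma decidable_pickled_decoder (T : countType) (dec : nat -> T) :
  cancel pickle dec -> computable1 (fun n => pickle (dec n)) -> decidable_pickled T.
Proof.
move=> decK Hdec.
apply: (computable_ext (computable_eqn Hdec (computable_proj (isT : 0 < 1)))) => v _.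
by rewrite (pickled_decoder decK).
Qed.

Lemma pickle_Posz n : pickle (Posz n) = code [:: code [:: n]; 0]. Proof. by []. Qed.
Lemma pickle_Negz n : pickle (Negz n) = code [:: 0; code [:: n]]. Proof. by []. Qed.

Definition code_int_sign n := code_head n != 0.

Lemma code_int_signE (z : int) : code_int_sign (pickle z) = (0 <= z)%R.
Proof.
case: z => n; rewrite ?pickle_Posz ?pickle_Negz /code_int_sign /code_head CodeSeq.codeK //.
by rewrite -[head _ _]/(code [:: n]) code_eq0.
Qed.

Definition code_int_abs n :=
  if code_int_sign n then code_head (code_head n) else (code_head (nth 0 (decode n) 1)).+1.

Lemma code_int_absE (z : int) : code_int_abs (pickle z) = `|z|%N.
Proof.
rewrite /code_int_abs code_int_signE.
by case: z => n; rewrite ?pickle_Posz ?pickle_Negz /code_head !CodeSeq.codeK.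
Qed.

Lemma computable_code_int_sign {k g} :
  computable k g -> computable_bool k (fun v => code_int_sign (g v)).
Proof.
move=> H; apply/computable_negb/computable_eqn; first exact: computable_code_head.
exact: computable_const.
Qed.

Lemma computable_code_int_abs {k g} :
  computable k g -> computable k (fun v => code_int_abs (g v)).
Proof.
move=> H; apply: computable_ifn; first exact: computable_code_int_sign.
  exact/computable_code_head/computable_code_head.
apply: (computable_ext (computable_add (computable_code_head
          (computable_nth_decode (computable_const k 1) H)) (computable_const k 1))).
by move=> v _; rewrite addn1.
Qed.

Lemma computable_map_int_sign : computable_map (fun z : int => (0 <= z)%R).
Proof.
exists (fun n => code_int_sign n) => [|z]; last by rewrite code_int_signE.
exact: computable_code_int_sign (computable_proj (isT : 0 < 1)).
Qed.

Lemma computable_map_absz : computable_map absz.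
Proof.
exists code_int_abs => [|z]; last exact: code_int_absE.
exact: computable_code_int_abs (computable_proj (isT : 0 < 1)).
Qed.

Lemma decidable_pickled_int : decidable_pickled int.
Proof.
pose dec n : int :=
  if code_int_sign n then Posz (code_int_abs n) else Negz (code_int_abs n).-1.
apply: (@decidable_pickled_decoder _ dec) => [z|].
  by rewrite /dec code_int_signE code_int_absE; case: z.
have Hn : computable 1 (fun v => nth 0 v 0) by apply: computable_proj.
have Hcode1 g : computable 1 g -> computable 1 (fun v => code [:: g v]).
  by move=> H; apply: (computable_ext (computable_code_cons H (computable_const 1 0))).
have Hcode2 g1 g2 : computable 1 g1 -> computable 1 g2 ->
    computable 1 (fun v => code [:: g1 v; g2 v]).
  move=> H1 H2; apply: (computable_ext (computable_code_cons H1 (Hcode1 _ H2))) => v _.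
  by rewrite CodeSeq.codeK.
have Habs := computable_code_int_abs Hn.
apply: (computable_ext (computable_ifn (computable_code_int_sign Hn)
  (Hcode2 _ _ (Hcode1 _ Habs) (computable_const 1 0))
  (Hcode2 _ _ (computable_const 1 0) (Hcode1 _ (computable_pred Habs))))).
by move=> v _ /=; rewrite /dec; case: code_int_sign.
Qed.

Lemma nat_decidable_preimage {P Q : nat -> Prop} {b : nat -> bool} {F : nat -> nat} :
  computable1 (fun n => b n) -> computable1 F -> nat_decidable Q ->
  (forall n, P n <-> b n /\ Q (F n)) -> nat_decidable P.
Proof.
move=> [pb Hb] [pF HF] [pQ HQ] HP.
have [pM HM] : computable 2 (fun v => nth 0 v 0 * nth 0 v 1).
  exact: computable_mul (computable_proj (isT : 0 < 2)) (computable_proj (isT : 1 < 2)).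
have [pE HE] : computable_bool 1 (fun v => nth 0 v 0 == 1).
  exact: computable_eqn (computable_proj (isT : 0 < 1)) (computable_const 1 1).
exists (PComp pM [:: pb; PComp pE [:: PComp pQ [:: pF]]]) => n.
have [y [Hy HyQ]] := HQ (F n).
exists (b n * (y == 1)); split.
  have HM' := HM [:: nat_of_bool (b n); nat_of_bool (y == 1)].
  have HE' := HE [:: y]; have Hb' := Hb [:: n]; have HF' := HF [:: n].
  rewrite !args_id //= in HM' HE' Hb' HF'.
  apply: ev_comp HM'; apply: evs_cons; first exact: Hb'.
  apply: evs_cons; last exact: evs_nil.
  apply: ev_comp HE'; apply: evs_cons; last exact: evs_nil.
  by apply: ev_comp Hy; apply: evs_cons; [exact: HF' | exact: evs_nil].
by rewrite HP -HyQ; case: (b n); case: eqP => /=; firstorder.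
Qed.

Lemma decidable_on_comap {T U : countType} (f : T -> U) {P : T -> Prop} {Q : U -> Prop} :
  decidable_pickled T -> computable_map f -> (forall x, P x <-> Q (f x)) ->
  decidable_on Q -> decidable_on P.
Proof.
move=> HT [F HF Ff] PQ HQ; apply: (nat_decidable_preimage HT HF HQ) => n.
rewrite /pickled; case E: pickle_inv => [x|] /=; last by split=> [|[]].
have <- : pickle x = n by have := @pickle_invK T n; rewrite E.
by rewrite Ff pickleK_inv PQ; split=> [|[]].
Qed.

(** * Groups and semidirect products *)

Section GroupTheory.
Context {G : group}.

Lemma gmulVr (x : G) : gmul x (ginv x) = gone G.
Proof.
set y := gmul x (ginv x).
have yy : gmul y y = y by rewrite /y -gmulA [gmul (ginv x) _]gmulA gmulV gmul1.
by rewrite -[LHS](gmul1 _ y) -[in LHS](gmulV _ y) -gmulA yy gmulV.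
Qed.

Lemma gmul1r (x : G) : gmul x (gone G) = x.
Proof. by rewrite -(gmulV _ x) gmulA gmulVr gmul1. Qed.

Lemma ginv_unique (x y : G) : gmul x y = gone G -> ginv x = y.
Proof. by move=> xy1; rewrite -[ginv x]gmul1r -xy1 gmulA gmulV gmul1. Qed.

Lemma ginvK (x : G) : ginv (ginv x) = x.
Proof. exact/ginv_unique/gmulV. Qed.

Lemma ginvM (x y : G) : ginv (gmul x y) = gmul (ginv y) (ginv x).
Proof.
apply: ginv_unique.
by rewrite -gmulA [gmul y _]gmulA gmulVr gmul1 gmulVr.
Qed.

End GroupTheory.

Definition invl {s} (l : 'I_s * bool) : 'I_s * bool := (l.1, ~~ l.2).

Definition inv_word {s} (w : seq ('I_s * bool)) := map invl (rev w).

Lemma letter_invl (G : group) (S : seq G) l : letter S (invl l) = ginv (letter S l).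
Proof. by case: l => i [] //=; rewrite /letter /= ginvK. Qed.

Lemma gword_cat (G : group) (S : seq G) w1 w2 :
  gword S (w1 ++ w2) = gmul (gword S w1) (gword S w2).
Proof. by elim: w1 => [|l w1 IH] /=; rewrite ?gmul1 // IH gmulA. Qed.

Lemma gword_inv_word (G : group) (S : seq G) w : gword S (inv_word w) = ginv (gword S w).
Proof.
elim: w => [|l w IH] /=; first by symmetry; apply: ginv_unique; rewrite gmul1.
rewrite /inv_word rev_cons -cats1 map_cat gword_cat -/(inv_word w) IH /= gmul1r.
by rewrite letter_invl ginvM.
Qed.

Section SemidirectProduct.
Context {G : group} {M : zmodType} {act : G -> M -> M}.
Hypothesis Hmod : is_Gmodule act.

Lemma act_is_additive g : {morph act g : x y / x + y}%R.
Proof. by case: Hmod => Hadd _ _ x y; apply: Hadd. Qed.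

Lemma act0 g : act g 0%R = 0%R.
Proof. by apply/(addrI (act g 0%R)); rewrite -act_is_additive !addr0. Qed.

Lemma actN g x : act g (- x)%R = (- act g x)%R.
Proof. by apply/(addrI (act g x)); rewrite -act_is_additive !subrr act0. Qed.

Lemma actMz g x (z : int) : act g (x *~ z)%R = (act g x *~ z)%R.
Proof.
have actMn n : act g (x *+ n)%R = (act g x *+ n)%R.
  by elim: n => [|n IH]; rewrite ?act0 // !mulrS act_is_additive IH.
by case: z => n; rewrite ?NegzE ?mulrNz ?actN -!pmulrn actMn.
Qed.

Lemma sdmulA p q r : sdmul act p (sdmul act q r) = sdmul act (sdmul act p q) r.
Proof.
case: Hmod => Hadd _ Hmul; rewrite /sdmul /=; congr pair; last exact: gmulA.
by rewrite Hadd Hmul addrA.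
Qed.

Lemma sdmul1 p : sdmul act (sdone G M) p = p.
Proof. by case: Hmod => _ H1 _; case: p => m g; rewrite /sdmul /= H1 add0r gmul1. Qed.

Lemma sdmul_conj m g :
  sdmul act (0%R, g) (sdmul act (m, gone G) (0%R, ginv g)) = (act g m, gone G).
Proof. by rewrite /sdmul /= act0 add0r addr0 gmul1 gmulVr. Qed.

Context {D : seq (M * G)}.

Lemma sdword_cat w1 w2 :
  sdword act D (w1 ++ w2) = sdmul act (sdword act D w1) (sdword act D w2).
Proof. by elim: w1 => [|l w1 IH] /=; rewrite ?sdmul1 // IH sdmulA. Qed.

Lemma sdword_rep {w m} n : sdword act D w = (m, gone G) ->
  sdword act D (flatten (nseq n w)) = (m *+ n, gone G)%R.
Proof.
move=> Hw; elim: n => [|n IH] //=; rewrite sdword_cat IH Hw /sdmul /= gmul1.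
by case: Hmod => _ -> _; rewrite mulrS.
Qed.

End SemidirectProduct.

(** * The reduction *)

Definition word_subst {s} {T} (uw : 'I_s * bool -> seq T) (w : seq ('I_s * bool)) :=
  flatten (map uw w).

Definition term_word {s b} {T} (uw : 'I_s * bool -> seq T) (vw : 'I_b * bool -> seq T)
    (t : int * seq ('I_s * bool) * 'I_b) :=
  word_subst uw t.1.2 ++ flatten (nseq `|t.1.1| (vw (t.2, (0 <= t.1.1)%R)))
  ++ word_subst uw (inv_word t.1.2).

Definition freemod_word {s b} {T} (uw : 'I_s * bool -> seq T) (vw : 'I_b * bool -> seq T)
    (x : freemod s b) :=
  flatten (map (term_word uw vw) x).

Lemma mulrn_abs_sign (M : zmodType) (m : M) (z : int) :
  ((if (0 <= z)%R then m else - m) *+ `|z|)%R = (m *~ z)%R.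
Proof. by case: z => n; rewrite ?NegzE ?mulrNz -?pmulrn //= mulNrn. Qed.

Section TranslationSemantics.
Context {G : group} {M : zmodType} {act : G -> M -> M}.
Hypothesis Hmod : is_Gmodule act.
Context {S : seq G} {B : seq M} {D : seq (M * G)}.
Context {uw : 'I_(size S) * bool -> seq ('I_(size D) * bool)}
        {vw : 'I_(size B) * bool -> seq ('I_(size D) * bool)}.
Hypothesis Huw : forall l, sdword act D (uw l) = (0%R, letter S l).
Hypothesis Hvw : forall p,
  sdword act D (vw p) = ((if p.2 then nth 0 B p.1 else - nth 0 B p.1)%R, gone G).

Lemma sdword_word_subst w : sdword act D (word_subst uw w) = (0%R, gword S w).
Proof.
elim: w => [|l w IH] //=.
by rewrite sdword_cat // -/(word_subst uw w) IH Huw /sdmul /= act0 // addr0.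
Qed.

Lemma sdword_term_word t :
  sdword act D (term_word uw vw t) = (act (gword S t.1.2) (nth 0 B t.2) *~ t.1.1, gone G)%R.
Proof.
rewrite /term_word !sdword_cat // !sdword_word_subst gword_inv_word.
by rewrite (sdword_rep Hmod _ (Hvw _)) /= mulrn_abs_sign sdmul_conj // actMz.
Qed.

Lemma sdword_freemod_word x :
  sdword act D (freemod_word uw vw x) = (rho act S B x, gone G).
Proof.
rewrite /rho; elim: x => [|t x IH]; first by rewrite big_nil.
rewrite /freemod_word /= sdword_cat // -/(freemod_word uw vw x) IH sdword_term_word.
by rewrite big_cons /sdmul /=; case: Hmod => _ -> _; rewrite gmul1.
Qed.

End TranslationSemantics.

Lemma computable_map_word_subst {s} {T : countType} (uw : 'I_s * bool -> seq T) :
  computable_map (word_subst uw).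
Proof.
exact: computable_map_comp (computable_map_map (computable_map_fin uw))
                           (computable_map_flatten _).
Qed.

Lemma computable_map_inv_word s : computable_map (@inv_word s).
Proof.
exact: computable_map_comp (computable_map_rev _) (computable_map_map (computable_map_fin invl)).
Qed.

Lemma computable_map_freemod_word {s b} {T : countType}
    (uw : 'I_s * bool -> seq T) (vw : 'I_b * bool -> seq T) :
  computable_map (freemod_word uw vw).
Proof.
have Hz : computable_map (fun t : int * seq ('I_s * bool) * 'I_b => t.1.1) :=
  computable_map_comp (computable_map_fst _ _) (computable_map_fst _ _).
have Hw : computable_map (fun t : int * seq ('I_s * bool) * 'I_b => t.1.2) :=
  computable_map_comp (computable_map_fst _ _) (computable_map_snd _ _).
have Hterm : computable_map (term_word uw vw).
  apply: computable_map_cat.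
    exact: computable_map_comp Hw (computable_map_word_subst uw).
  apply: computable_map_cat; last first.
    exact: computable_map_comp (computable_map_comp Hw (computable_map_inv_word s))
                               (computable_map_word_subst uw).
  apply: computable_map_nseq; first exact: computable_map_comp Hz computable_map_absz.
  apply: computable_map_comp (computable_map_fin vw).
  exact: computable_map_pair (computable_map_snd _ _)
                             (computable_map_comp Hz computable_map_int_sign).
exact: computable_map_comp (computable_map_map Hterm) (computable_map_flatten _).
Qed.

Lemma decidable_pickled_freemod s b : decidable_pickled (freemod s b).
Proof.
apply: decidable_pickled_seq; apply: decidable_pickled_pair; last exact: decidable_pickled_fin.
apply: decidable_pickled_pair; first exact: decidable_pickled_int.
exact/decidable_pickled_seq/decidable_pickled_fin.
Qed.

Lemma sd_generates_fin_words {G : group} {M : zmodType} {act : G -> M -> M}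
    {D : seq (M * G)} {I : finType} (val : I -> M * G) :
  sd_generates act D -> exists w : I -> seq ('I_(size D) * bool),
    forall i, sdword act D (w i) = val i.
Proof.
move=> HD; apply: (@fin_all_exists I _ (fun i w => sdword act D w = val i)) => i.
by have [w Hw] := HD (val i); exists w.
Qed.

Theorem proposition1
  (G : group) (M : zmodType) (act : G -> M -> M)
  (Hmod : is_Gmodule act)
  (S : seq G) (HS : generates S)
  (B : seq M) (HB : module_generates act S B)
  (X : seq M)
  (Hundec : ~ decidable_on
              (fun x : freemod (size S) (size B) => in_NGspan act X (rho act S B x))) :
  forall D : seq (M * G), sd_generates act D ->
    ~ decidable_on
        (fun w : seq ('I_(size D) * bool) => in_NsdG act X (sdword act D w)).
Proof.
move=> D HD Hdec; apply: Hundec.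
have [uw Huw] := sd_generates_fin_words
  (fun l : 'I_(size S) * bool => (0%R, letter S l)) HD.
have [vw Hvw] := sd_generates_fin_words
  (fun p : 'I_(size B) * bool => ((if p.2 then nth 0 B p.1 else - nth 0 B p.1)%R, gone G)) HD.
apply: (decidable_on_comap (freemod_word uw vw)) Hdec.
- exact: decidable_pickled_freemod.
- exact: computable_map_freemod_word.
- by move=> x; rewrite /in_NsdG (sdword_freemod_word Hmod Huw Hvw).
Qed.
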